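(* For $n\ge 1$, the number of shallow $132$-avoiding involutions in $S_n$ (permutations with $\pi=\pi^{-1}$) equals $F_{n+1}$.
   Context: For $\pi\in S_n$: $D(\pi)=\sum_{i}|\pi_i-i|$, $I(\pi)$ is the number of inversions, $T(\pi)=n-\mathrm{cyc}(\pi)$ with $\mathrm{cyc}$ the number of cycles in the disjoint cycle decomposition; $\pi$ is shallow if $I(\pi)+T(\pi)=D(\pi)$. A permutation avoids a pattern $\sigma$ if it has no subsequence order-isomorphic to $\sigma$. $F_m$ are the Fibonacci numbers with $F_1=F_2=1$. *)

From mathcomp Require Import all_boot all_order all_fingroup.
Set Implicit Arguments. Unset Strict Implicit. Unset Printing Implicit Defensive.

(* Permutations of S_n are 'S_n = {perm 'I_n}; positions/values 0..n-1
   (shifting by one does not change any of the statistics below). *)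

Definition natdist (a b : nat) : nat := (a - b) + (b - a).

Definition Dstat n (s : 'S_n) : nat := \sum_(i < n) natdist (s i) i.

Definition Istat n (s : 'S_n) : nat :=
  #|[set p : 'I_n * 'I_n | (p.1 < p.2) && (s p.2 < s p.1)]|.

Definition cyc n (s : 'S_n) : nat := #|porbits s|.

Definition Tstat n (s : 'S_n) : nat := n - cyc s.

Definition shallow n (s : 'S_n) : bool := Istat s + Tstat s == Dstat s.

Definition contains_pattern n (sg : seq nat) (s : 'S_n) : bool :=
  [exists g : {ffun 'I_(size sg) -> 'I_n},
     [forall a : 'I_(size sg), forall b : 'I_(size sg),
        ((a < b) ==> (g a < g b)) &&
        ((nth 0 sg a < nth 0 sg b) == (s (g a) < s (g b)))]].

Definition avoids n (sg : seq nat) (s : 'S_n) : bool := ~~ contains_pattern sg s.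

Definition involution n (s : 'S_n) : bool := s^-1%g == s.

(* Fibonacci numbers with F_1 = F_2 = 1 (and F_0 = 0) *)
Fixpoint fib (m : nat) : nat :=
  match m with
  | 0 => 0
  | 1 => 1
  | (k.+1 as k1).+1 => fib k1 + fib k
  end.

From mathcomp Require Import all_boot all_order all_fingroup.
From mathcomp Require Import zify.
Set Implicit Arguments. Unset Strict Implicit. Unset Printing Implicit Defensive.

(* If pi(n) <> n, exchanging the positions of the values n and pi(n) yields a
   permutation pi' fixing n, and D - I - T drops by 2 (r - (pi(n) - pi^-1(n))^+),
   where r >= (pi(n) - pi^-1(n))^+ is the number of inversions of pi' starting at
   position pi^-1(n).  Induction on n gives the Petersen--Tenner inequality
   I + T <= D; for a shallow involution (pi(n) = pi^-1(n)) it forces r = 0, and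
   avoiding 132 then forces pi(1) = n.  So a shallow 132-avoiding involution of
   [n] either fixes n or exchanges 1 and n, and removing these points is a
   bijection onto such involutions of [n-1], resp. [n-2]: the counts satisfy the
   Fibonacci recurrence. *)

Lemma sum_nat_interval N lo hi :
  \sum_(i < N) ((lo <= i) && (i < hi) : nat) = minn hi N - lo.
Proof.
elim: N => [|N IH]; first by rewrite big_ord0; lia.
rewrite big_ord_recr /= IH.
by case: (leqP lo N) => /= h1; case: (ltnP N hi) => /= h2; lia.
Qed.

Lemma sum_nat_pred1 N (i : 'I_N) x : \sum_(p < N) ((p == i) * x) = x.
Proof.
rewrite (bigD1 i) //= eqxx mul1n big1 ?addn0 // => p /negbTE ->.
by rewrite mul0n.
Qed.

Lemma big_ord_recr_lift n (F : 'I_n.+1 -> nat) :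
  \sum_(i < n.+1) F i = \sum_(k < n) F (lift ord_max k) + F ord_max.
Proof.
rewrite big_ord_recr /=; congr (_ + _); apply: eq_bigr => k _; congr F.
by apply: val_inj; rewrite /= /bump leqNgt ltn_ord.
Qed.

Lemma ord_max_ltn n (q : 'I_n.+1) : (@ord_max n < q) = false.
Proof. by apply/negbTE; rewrite -leqNgt leq_ord. Qed.

Lemma ltn_ord_max n (x : 'I_n.+1) : (x < n) = (x != ord_max).
Proof. by rewrite ltn_neqAle leq_ord andbT -val_eqE. Qed.

Definition inversion n (s : 'S_n) (p q : 'I_n) : bool := (p < q) && (s q < s p).

Definition inversions_from n (s : 'S_n) (p : 'I_n) : nat :=
  \sum_(q < n) (inversion s p q : nat).

Lemma Istat_inversions_from n (s : 'S_n) : Istat s = \sum_(p < n) inversions_from s p.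
Proof.
rewrite /Istat /inversions_from pair_big /= -sum1_card.
rewrite big_mkcond /=; apply: eq_bigr => -[p q] _ /=.
by rewrite inE /inversion; case: ifP.
Qed.

Lemma inversions_from_max n (s : 'S_n.+1) : inversions_from s ord_max = 0.
Proof. by apply: big1 => q _; rewrite /inversion ord_max_ltn. Qed.

Lemma involutionP n (s : 'S_n) : reflect (forall x, s (s x) = x) (involution s).
Proof.
apply: (iffP eqP) => [sV x|ssK]; first by rewrite -{1}sV permK.
by apply/permP => x; apply: (@perm_inj _ s); rewrite permKV ssK.
Qed.

Definition pattern132 n (s : 'S_n) : bool :=
  [exists a : 'I_n, exists b : 'I_n, exists c : 'I_n, [&& a < b, b < c, s a < s c & s c < s b]].

Lemma contains_pattern132 n (s : 'S_n) : contains_pattern [:: 1; 3; 2] s = pattern132 s.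
Proof.
apply/existsP/existsP => [[g /forallP H]|[a /existsP [b /existsP [c /and4P [h1 h2 h3 h4]]]]].
  have H' (i j : 'I_3) := forallP (H i) j.
  exists (g (@Ordinal 3 0 isT)); apply/existsP; exists (g (@Ordinal 3 1 isT)).
  apply/existsP; exists (g (@Ordinal 3 2 isT)).
  move: (H' (@Ordinal 3 0 isT) (@Ordinal 3 1 isT)) (H' (@Ordinal 3 0 isT) (@Ordinal 3 2 isT)).
  move: (H' (@Ordinal 3 1 isT) (@Ordinal 3 2 isT)) (H' (@Ordinal 3 2 isT) (@Ordinal 3 1 isT)).
  by move=> /= /andP [-> _] /eqP <- /andP [-> _] /andP [_ /eqP <-].
exists [ffun i : 'I_3 => nth a [:: a; b; c] i].
have h13 := ltn_trans h1 h2; have h24 := ltn_trans h3 h4.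
apply/forallP => -[[|[|[|i]]] Hi] //; apply/forallP => -[[|[|[|j]]] Hj] //=;
  rewrite !ffunE /= ?ltnn ?h1 ?h2 ?h3 ?h4 ?h13 ?h24 //= eq_sym ltnNge ltnW //.
Qed.

(** * Permutations fixing a point *)

Lemma porbit_fixed T (s : {perm T}) x : s x = x -> porbit s x = [set x].
Proof.
move=> sx; apply/setP => y; rewrite in_set1.
by apply/porbitP/eqP => [[m ->]|->]; [rewrite permX_fix | exists 0; rewrite expg0 perm1].
Qed.

Lemma lift_permX n (i : 'I_n.+1) (s : 'S_n) m :
  ((lift_perm i i s) ^+ m)%g = lift_perm i i (s ^+ m)%g.
Proof.
elim: m => [|m IH]; first by rewrite !expg0 lift_perm1.
by rewrite !expgSr IH lift_permM.
Qed.

Lemma porbit_lift_perm n (i : 'I_n.+1) (s : 'S_n) k :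
  porbit (lift_perm i i s) (lift i k) = [set lift i y | y in porbit s k].
Proof.
apply/setP => y; apply/porbitP/imsetP => [[m ->]|[z /porbitP [m ->] ->]].
  by exists ((s ^+ m)%g k); [apply: mem_porbit | rewrite lift_permX lift_perm_lift].
by exists m; rewrite lift_permX lift_perm_lift.
Qed.

Lemma porbits_lift_perm n (i : 'I_n.+1) (s : 'S_n) :
  porbits (lift_perm i i s) =
  [set i] |: [set [set lift i y | y in A] | A : {set 'I_n} in porbits s].
Proof.
apply/setP => X; rewrite inE; apply/imsetP/orP.
  case=> x _ ->; case: (unliftP i x) => [k ->|->].
    by right; rewrite porbit_lift_perm; apply/imsetP; exists (porbit s k) => //;
      apply/imsetP; exists k.
  by left; rewrite porbit_fixed ?lift_perm_id // set11.
case => [/set1P ->| /imsetP [A /imsetP [k _ ->] ->]].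
  by exists i => //; rewrite porbit_fixed ?lift_perm_id.
by exists (lift i k) => //; rewrite porbit_lift_perm.
Qed.

Lemma cyc_lift_perm n (i : 'I_n.+1) (s : 'S_n) : cyc (lift_perm i i s) = (cyc s).+1.
Proof.
rewrite /cyc porbits_lift_perm cardsU1 card_imset; last exact: imset_inj (@lift_inj _ i).
suff /negbTE -> : [set i] \notin [set [set lift i y | y in A] | A : {set 'I_n} in porbits s].
  by [].
apply/imsetP => -[A _ /setP /(_ i)]; rewrite set11 => /esym /imsetP [y _ /eqP].
by rewrite (negbTE (neq_lift i y)).
Qed.

Lemma cyc_leq n (s : 'S_n) : cyc s <= n.
Proof. by rewrite /cyc /porbits (leq_trans (leq_imset_card _ _)) // card_ord. Qed.

Lemma perm_fixed_lift n (i : 'I_n.+1) (u : 'S_n.+1) :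
  u i = i -> exists r : 'S_n, u = lift_perm i i r.
Proof.
move=> ui.
have u_lift k : exists y, u (lift i k) = lift i y.
  case: (unliftP i (u (lift i k))) => [y ->|]; first by exists y.
  by rewrite -{2}ui => /perm_inj /eqP; rewrite eq_sym (negbTE (neq_lift i k)).
pose f k := odflt k (unlift i (u (lift i k))).
have fE k : lift i (f k) = u (lift i k) by have [y Hy] := u_lift k; rewrite /f Hy liftK.
have f_inj : injective f.
  by move=> k1 k2 E; apply: (@lift_inj _ i); apply: (@perm_inj _ u); rewrite -!fE E.
exists (perm f_inj); apply/permP => x; case: (unliftP i x) => [k ->|->].
  by rewrite lift_perm_lift permE fE.
by rewrite lift_perm_id.
Qed.

Definition fixlast n (r : 'S_n) : 'S_n.+1 := lift_perm ord_max ord_max r.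

Lemma fixlast_max n (r : 'S_n) : fixlast r ord_max = ord_max.
Proof. exact: lift_perm_id. Qed.

Lemma fixlast_lift n (r : 'S_n) k : fixlast r (lift ord_max k) = lift ord_max (r k).
Proof. exact: lift_perm_lift. Qed.

Lemma fixlast_inj n : injective (@fixlast n).
Proof.
move=> r1 r2 E; apply/permP => k; apply: (@lift_inj _ ord_max).
by rewrite -!fixlast_lift E.
Qed.

Lemma Dstat_fixlast n (r : 'S_n) : Dstat (fixlast r) = Dstat r.
Proof.
rewrite /Dstat big_ord_recr_lift fixlast_max /natdist subnn !addn0.
by apply: eq_bigr => k _; rewrite fixlast_lift !lift_max.
Qed.

Lemma Istat_fixlast n (r : 'S_n) : Istat (fixlast r) = Istat r.
Proof.
rewrite !Istat_inversions_from big_ord_recr_lift inversions_from_max addn0.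
apply: eq_bigr => k _.
rewrite /inversions_from big_ord_recr_lift /inversion fixlast_max ord_max_ltn andbF addn0.
by apply: eq_bigr => j _; rewrite !fixlast_lift !lift_max.
Qed.

Lemma Tstat_fixlast n (r : 'S_n) : Tstat (fixlast r) = Tstat r.
Proof. by rewrite /Tstat cyc_lift_perm subSS. Qed.

Lemma shallow_fixlast n (r : 'S_n) : shallow (fixlast r) = shallow r.
Proof. by rewrite /shallow Dstat_fixlast Istat_fixlast Tstat_fixlast. Qed.

Lemma involution_fixlast n (r : 'S_n) : involution (fixlast r) = involution r.
Proof.
apply/involutionP/involutionP => rK x.
  by apply: (@lift_inj _ ord_max); rewrite -!fixlast_lift rK.
by case: (unliftP ord_max x) => [k ->|->]; rewrite ?fixlast_lift ?rK ?fixlast_max.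
Qed.

Lemma pattern132_fixlast n (r : 'S_n) : pattern132 (fixlast r) = pattern132 r.
Proof.
apply/existsP/existsP => -[a /existsP [b /existsP [c /and4P [h1 h2 h3 h4]]]].
  move: h1 h2 h3 h4.
  case: (unliftP ord_max c) => [{}c ->|->]; last by rewrite fixlast_max ord_max_ltn.
  case: (unliftP ord_max b) => [{}b ->|->]; last by rewrite ord_max_ltn.
  case: (unliftP ord_max a) => [{}a ->|->]; last by rewrite ord_max_ltn.
  rewrite !fixlast_lift !lift_max => h1 h2 h3 h4.
  by exists a; apply/existsP; exists b; apply/existsP; exists c; rewrite h1 h2 h3 h4.
exists (lift ord_max a); apply/existsP; exists (lift ord_max b).
apply/existsP; exists (lift ord_max c).
by rewrite !fixlast_lift !lift_max h1 h2 h3 h4.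
Qed.

(** * Exchanging the first and last points around a shifted permutation *)

Definition inner n (k : 'I_n) : 'I_n.+2 := lift ord0 (lift ord_max k).

Definition swapends n (r : 'S_n) : 'S_n.+2 :=
  (tperm ord0 ord_max * lift_perm ord0 ord0 (fixlast r))%g.

Lemma inner_val n (k : 'I_n) : inner k = k.+1 :> nat.
Proof. by rewrite /inner lift0 lift_max. Qed.

Lemma inner_inj n : injective (@inner n).
Proof. by move=> k k' /(congr1 (@nat_of_ord _)); rewrite !inner_val => -[] /val_inj. Qed.

Lemma ord_max_lift0 n : (ord_max : 'I_n.+2) = lift ord0 ord_max.
Proof. by apply: val_inj; rewrite /= /bump add1n. Qed.

Lemma ord_inner_cases n (x : 'I_n.+2) : [\/ x = ord0, x = ord_max | exists k, x = inner k].
Proof.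
case: (unliftP ord0 x) => [y ->|->]; last by constructor 1.
case: (unliftP ord_max y) => [k ->|->]; last by constructor 2; rewrite ord_max_lift0.
by constructor 3; exists k.
Qed.

Lemma swapends0 n (r : 'S_n) : swapends r ord0 = ord_max.
Proof. by rewrite /swapends permM tpermL ord_max_lift0 lift_perm_lift fixlast_max. Qed.

Lemma swapends_max n (r : 'S_n) : swapends r ord_max = ord0.
Proof. by rewrite /swapends permM tpermR lift_perm_id. Qed.

Lemma swapends_inner n (r : 'S_n) k : swapends r (inner k) = inner (r k).
Proof.
have k0 : ord0 != inner k by apply/eqP => /(congr1 (@nat_of_ord _)); rewrite inner_val.
have k_max : ord_max != inner k.
  by apply/eqP => /(congr1 (@nat_of_ord _)); rewrite inner_val /=; have := ltn_ord k; lia.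
by rewrite /swapends permM tpermD // lift_perm_lift fixlast_lift.
Qed.

Lemma swapends_inj n : injective (@swapends n).
Proof.
move=> r1 r2 E; apply/permP => k; apply: (@inner_inj n).
by rewrite -!swapends_inner E.
Qed.

Lemma perm_swapped_ends n (s : 'S_n.+2) :
  s ord0 = ord_max -> s ord_max = ord0 -> exists r : 'S_n, s = swapends r.
Proof.
move=> s0 s_max; set w := (tperm ord0 ord_max * s)%g.
have [w1 Ew1] : exists w1, w = lift_perm ord0 ord0 w1.
  by apply: perm_fixed_lift; rewrite permM tpermL.
have [r Er] : exists r, w1 = fixlast r.
  apply: perm_fixed_lift; apply: (@lift_inj _ ord0).
  by rewrite -(lift_perm_lift ord0 ord0) -Ew1 -ord_max_lift0 permM tpermR.
by exists r; rewrite /swapends -Er -Ew1 tpermKg.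
Qed.

Lemma big_ord_inner n (F : 'I_n.+2 -> nat) :
  \sum_(i < n.+2) F i = F ord0 + \sum_(k < n) F (inner k) + F ord_max.
Proof. by rewrite big_ord_recl big_ord_recr_lift addnA -ord_max_lift0. Qed.

Lemma Dstat_swapends n (r : 'S_n) : Dstat (swapends r) = Dstat r + 2 * n.+1.
Proof.
rewrite /Dstat big_ord_inner swapends0 swapends_max.
under eq_bigr => k _ do rewrite swapends_inner !inner_val /natdist !subSS.
by rewrite /natdist /=; lia.
Qed.

Lemma Istat_swapends n (r : 'S_n) : Istat (swapends r) = Istat r + (2 * n).+1.
Proof.
rewrite !Istat_inversions_from big_ord_inner inversions_from_max.
have -> : inversions_from (swapends r) ord0 = n.+1.
  rewrite /inversions_from big_ord_inner /inversion swapends0 swapends_max /=.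
  under eq_bigr => k _ do rewrite swapends_inner !inner_val /= ltnS ltn_ord.
  by rewrite sum_nat_const card_ord muln1 addn1.
have -> : \sum_(k < n) inversions_from (swapends r) (inner k) =
          \sum_(k < n) (inversions_from r k + 1).
  apply: eq_bigr => k _.
  rewrite /inversions_from big_ord_inner /inversion swapends0 swapends_max swapends_inner.
  under eq_bigr => j _ do rewrite swapends_inner !inner_val !ltnS.
  by rewrite !inner_val /= ltnS ltn_ord /= add0n.
by rewrite big_split /= sum1_card card_ord; lia.
Qed.

Lemma Tstat_swapends n (r : 'S_n) : Tstat (swapends r) = (Tstat r).+1.
Proof.
have := porbits_mul_tperm (lift_perm ord0 ord0 (fixlast r)) ord0 ord_max.
rewrite porbit_fixed; last by rewrite ord_max_lift0 lift_perm_lift fixlast_max.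
rewrite in_set1 -val_eqE /=.
change (cyc (swapends r) + 2 = cyc (lift_perm ord0 ord0 (fixlast r)) + 1 ->
        Tstat (swapends r) = (Tstat r).+1).
by rewrite !cyc_lift_perm /Tstat; have := cyc_leq r; lia.
Qed.

Lemma shallow_swapends n (r : 'S_n) : shallow (swapends r) = shallow r.
Proof.
by rewrite /shallow Dstat_swapends Istat_swapends Tstat_swapends; apply/eqP/eqP; lia.
Qed.

Lemma involution_swapends n (r : 'S_n) : involution (swapends r) = involution r.
Proof.
apply/involutionP/involutionP => rK x.
  by apply: (@inner_inj n); rewrite -!swapends_inner rK.
case: (ord_inner_cases x) => [->|->|[k ->]].
- by rewrite swapends0 swapends_max.
- by rewrite swapends_max swapends0.
- by rewrite !swapends_inner rK.
Qed.

Lemma pattern132_swapends n (r : 'S_n) : pattern132 (swapends r) = pattern132 r.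
Proof.
apply/existsP/existsP => -[a /existsP [b /existsP [c /and4P [h1 h2 h3 h4]]]].
  move: h1 h2 h3 h4.
  case: (ord_inner_cases c) => [->|->|[{}c ->]]; first by rewrite ltn0.
    by rewrite swapends_max ltn0.
  case: (ord_inner_cases b) => [->|->|[{}b ->]]; first by rewrite ltn0.
    by rewrite ord_max_ltn.
  case: (ord_inner_cases a) => [->|->|[{}a ->]].
  - by rewrite swapends0 ord_max_ltn.
  - by rewrite ord_max_ltn.
  rewrite !swapends_inner !inner_val !ltnS => h1 h2 h3 h4.
  by exists a; apply/existsP; exists b; apply/existsP; exists c; rewrite h1 h2 h3 h4.
exists (inner a); apply/existsP; exists (inner b); apply/existsP; exists (inner c).
by rewrite !swapends_inner !inner_val !ltnS h1 h2 h3 h4.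
Qed.

(** * Moving the value [n] to the last position *)

Section SwapLast.
Variables (n : nat) (s : 'S_n.+1).
Hypothesis s_max : s ord_max != ord_max.

Let m := (s^-1)%g ord_max.
Let a := s ord_max.
Let s' := (tperm m ord_max * s)%g.

Lemma swap_last_at_m : s' m = a. Proof. by rewrite /s' permM tpermL. Qed.

Lemma swap_last_max : s' ord_max = ord_max.
Proof. by rewrite /s' permM tpermR permKV. Qed.

Lemma swap_last_id p : p != m -> p != ord_max -> s' p = s p.
Proof. by move=> pm p_max; rewrite /s' permM tpermD // eq_sym. Qed.

Lemma m_ltn : m < n.
Proof. by rewrite ltn_ord_max; apply: contra s_max => /eqP {1}<-; rewrite permKV. Qed.

Lemma m_neq_max : m != ord_max. Proof. by rewrite -ltn_ord_max m_ltn. Qed.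

Lemma a_ltn : a < n. Proof. by rewrite ltn_ord_max. Qed.

Lemma cyc_swap_last : cyc s' = (cyc s).+1.
Proof.
have := porbits_mul_tperm s m ord_max.
have -> : m \in porbit s ord_max.
  by rewrite porbit_sym; have := mem_porbit s 1 m; rewrite expg1 permKV.
by rewrite -val_eqE /= ltn_eqF ?m_ltn //= addn0 addn1.
Qed.

Lemma Dstat_swap_last : Dstat s + natdist a m = Dstat s' + (n - m) + (n - a).
Proof.
rewrite /Dstat -(sum_nat_pred1 m (natdist a m)) -(sum_nat_pred1 m (n - m)).
rewrite -(sum_nat_pred1 (@ord_max n) (n - a)) -!big_split /=.
apply: eq_bigr => p _; have := m_ltn; have := a_ltn.
case: (eqVneq p m) => [->|pm].
  by rewrite permKV swap_last_at_m (negbTE m_neq_max) /natdist /=; lia.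
case: (eqVneq p ord_max) => [->|p_max].
  by rewrite swap_last_max -/a /natdist /=; lia.
by rewrite swap_last_id //; lia.
Qed.

Lemma inversions_from_m : inversions_from s m = n - m.
Proof.
rewrite /inversions_from /inversion permKV.
rewrite (eq_bigr (fun q : 'I_n.+1 => ((m.+1 <= q) && (q < n.+1) : nat))).
  by rewrite sum_nat_interval minnn subSS.
move=> q _; rewrite ltn_ord andbT ltn_ord_max.
case: (eqVneq q m) => [->|qm]; first by rewrite ltnn.
by rewrite -(permKV s ord_max) (inj_eq (@perm_inj _ s)) qm andbT.
Qed.

Lemma inversions_from_swap_last p : p != m -> p != ord_max ->
  inversions_from s p = inversions_from s' p + ((m < p) && (a < s p)).
Proof.
move=> pm p_max.
suff row_eq : inversions_from s p + ((p < m) && (a < s p)) =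
               inversions_from s' p + (a < s p).
  case: (ltngtP p m) row_eq => [_|_|/val_inj pmE]; last by rewrite pmE eqxx in pm.
    by case: (a < s p) => /=; lia.
  by case: (a < s p) => /=; lia.
rewrite /inversions_from -(sum_nat_pred1 m ((p < m) && (a < s p))).
rewrite -(sum_nat_pred1 (@ord_max n) (a < s p)) -!big_split /=; apply: eq_bigr => q _.
rewrite /inversion (swap_last_id pm p_max).
case: (eqVneq q m) => [->|qm].
  by rewrite permKV swap_last_at_m ord_max_ltn andbF (negbTE m_neq_max) /= mul1n addn0.
case: (eqVneq q ord_max) => [->|q_max].
  by rewrite swap_last_max ord_max_ltn andbF /= ltn_ord_max p_max mul1n mul0n addn0.
by rewrite swap_last_id // !mul0n.
Qed.

Lemma Istat_swap_last : Istat s + 2 * inversions_from s' m + 1 = Istat s' + 2 * (n - m).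
Proof.
pose above_after_m := \sum_(p < n.+1) ((m < p) && (a < s p) : nat).
have rows : Istat s + inversions_from s' m = Istat s' + (n - m) + above_after_m.
  rewrite !Istat_inversions_from -(sum_nat_pred1 m (inversions_from s' m)).
  rewrite -(sum_nat_pred1 m (n - m)) -!big_split /=; apply: eq_bigr => p _.
  case: (eqVneq p m) => [->|pm].
    by rewrite inversions_from_m ltnn /= !mul1n addn0 addnC.
  case: (eqVneq p ord_max) => [->|p_max].
    by rewrite !inversions_from_max -/a ltnn andbF !mul0n.
  by rewrite (inversions_from_swap_last pm p_max) !mul0n !addn0.
have split_m : above_after_m + inversions_from s' m = n - m - 1.
  have -> : n - m - 1 = minn n n.+1 - m.+1 by rewrite (minn_idPl (leqnSn n)); lia.
  rewrite -sum_nat_interval /inversions_from -big_split /=; apply: eq_bigr => q _.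
  rewrite /inversion swap_last_at_m.
  case: (eqVneq q ord_max) => [->|q_max].
    by rewrite swap_last_max -/a ltnn !andbF /= ltnn (leq_gtF (ltnW a_ltn)) !andbF.
  case: (eqVneq q m) => [->|qm]; first by rewrite ltnn.
  have sq_a : s q != a by rewrite (inj_eq (@perm_inj _ s)).
  rewrite swap_last_id // ltn_ord_max q_max andbT; case: (m < q) => //=.
  by case: (ltngtP a (s q)) => // /val_inj E; rewrite E eqxx in sq_a.
by have := m_ltn; lia.
Qed.

Lemma swap_last_inversions_from_m : a - m <= inversions_from s' m.
Proof.
have count_below (k : 'I_n.+1) : \sum_(q < n.+1) (q < k : nat) = k.
  rewrite (eq_bigr (fun q : 'I_n.+1 => ((0 <= q) && (q < k) : nat))) //.
  by rewrite sum_nat_interval (minn_idPl (ltnW (ltn_ord k))) subn0.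
have below_a : \sum_(q < n.+1) (s' q < a : nat) = a.
  by rewrite -[RHS]count_below [RHS](reindex_inj (@perm_inj _ s')).
(* s' takes a values below a, at most m of them at positions before m. *)
suff : a <= inversions_from s' m + m by lia.
rewrite -{1}below_a -[m in _ + m]count_below /inversions_from -big_split /=.
apply: leq_sum => q _; rewrite /inversion.
case: (ltngtP m q) => [_|_|/val_inj <-]; last by rewrite swap_last_at_m ltnn.
  by rewrite swap_last_at_m addn0.
by case: (s' q < a).
Qed.

Lemma defect_swap_last :
  Dstat s + Istat s' + Tstat s' + 2 * (a - m) =
  Dstat s' + Istat s + Tstat s + 2 * inversions_from s' m.
Proof.
have := Dstat_swap_last; have := Istat_swap_last; have := cyc_swap_last.
have := cyc_leq s; have := cyc_leq s'; have := m_ltn; have := a_ltn.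
rewrite /Tstat /natdist; lia.
Qed.

End SwapLast.

(** * The Petersen--Tenner inequality and the Fibonacci recurrence *)

Lemma Istat_Tstat_leq_Dstat n (s : 'S_n) : Istat s + Tstat s <= Dstat s.
Proof.
elim: n s => [|n IH] s; first by rewrite Istat_inversions_from /Dstat /Tstat !big_ord0.
case: (eqVneq (s ord_max) ord_max) => s_max.
  have [r ->] := perm_fixed_lift s_max.
  by rewrite -/(fixlast r) Istat_fixlast Tstat_fixlast Dstat_fixlast.
have [r Er] := perm_fixed_lift (swap_last_max s).
have := IH r; rewrite -Istat_fixlast -Tstat_fixlast -Dstat_fixlast /fixlast -Er.
have := defect_swap_last s_max; have := swap_last_inversions_from_m s_max; lia.
Qed.

Lemma shallow132_involution_first n (s : 'S_n.+1) :
  shallow s -> ~~ pattern132 s -> involution s -> s ord_max != ord_max ->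
  s ord0 = ord_max.
Proof.
move=> /eqP shallow_s no132 /involutionP sK s_max.
set m := (s^-1)%g ord_max; set s' := (tperm m ord_max * s)%g.
have s_m : s m = ord_max by rewrite permKV.
have s_max_m : s ord_max = m by rewrite -{1}s_m sK.
have no_inv_m : inversions_from s' m = 0.
  have := defect_swap_last s_max; have := Istat_Tstat_leq_Dstat s'.
  by rewrite -/m -/s' s_max_m subnn; lia.
apply/eqP; apply: contraT => s0_max; set q := s ord0.
have s_q : s q = ord0 by rewrite sK.
have m_gt0 : 0 < m.
  by rewrite lt0n; apply: contra s0_max => /eqP m0; rewrite /q -s_m; apply/eqP/congr1/val_inj.
have m_lt_q : m < q.
  case: (ltngtP m q) => // [q_lt_m|/val_inj mq].
    case/negP: no132; apply/existsP; exists ord0; apply/existsP; exists m.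
    by apply/existsP; exists ord_max; rewrite m_gt0 s_max_m s_m q_lt_m /= (m_ltn s_max).
  by move: (m_ltn s_max) s_q; rewrite -mq s_m => m_lt /(congr1 val) /=; lia.
have : 0 < inversions_from s' m.
  have q_m : q != m by rewrite neq_ltn m_lt_q orbT.
  have q_max : q != ord_max by apply: contraTneq m_gt0 => qE; rewrite -s_max_m -qE s_q.
  rewrite /inversions_from (bigD1 q) //= /inversion m_lt_q swap_last_at_m.
  by rewrite swap_last_id // s_q s_max_m m_gt0.
by rewrite no_inv_m.
Qed.

Definition shallow132inv n :=
  [set s : 'S_n | [&& shallow s, avoids [:: 1; 3; 2] s & involution s]].

Lemma fixlast_in n (r : 'S_n) : (fixlast r \in shallow132inv n.+1) = (r \in shallow132inv n).
Proof.
by rewrite !inE /avoids !contains_pattern132 shallow_fixlast pattern132_fixlast involution_fixlast.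
Qed.

Lemma swapends_in n (r : 'S_n) : (swapends r \in shallow132inv n.+2) = (r \in shallow132inv n).
Proof.
rewrite !inE /avoids !contains_pattern132.
by rewrite shallow_swapends pattern132_swapends involution_swapends.
Qed.

Lemma shallow132inv_rec n :
  shallow132inv n.+2 = (@fixlast n.+1) @: shallow132inv n.+1 :|: (@swapends n) @: shallow132inv n.
Proof.
apply/setP => s; rewrite in_setU; apply/idP/orP => [s_in|]; last first.
  by case=> /imsetP [r r_in ->]; rewrite ?fixlast_in ?swapends_in.
case: (eqVneq (s ord_max) ord_max) => s_max.
  have [r Er] := perm_fixed_lift s_max.
  by left; apply/imsetP; exists r; rewrite // -fixlast_in /fixlast -Er.
move: (s_in); rewrite inE /avoids contains_pattern132 => /and3P [sh no132 inv_s].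
have s0 := shallow132_involution_first sh no132 inv_s s_max.
have [r Er] : exists r, s = swapends r.
  by apply: perm_swapped_ends => //; rewrite -s0 (involutionP _ inv_s).
by right; apply/imsetP; exists r; rewrite // -swapends_in -Er.
Qed.

Lemma card_shallow132inv_rec n :
  #|shallow132inv n.+2| = #|shallow132inv n.+1| + #|shallow132inv n|.
Proof.
rewrite shallow132inv_rec cardsU !card_imset; try exact: fixlast_inj; try exact: swapends_inj.
suff -> : (@fixlast n.+1) @: shallow132inv n.+1 :&: (@swapends n) @: shallow132inv n = set0.
  by rewrite cards0 subn0.
apply/setP => s; rewrite !inE; apply/negP => /andP [/imsetP [r1 _ ->] /imsetP [r2 _]].
by move/(congr1 (fun u : 'S_n.+2 => val (u ord_max))); rewrite fixlast_max swapends_max.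
Qed.

Lemma shallow132inv0 : shallow132inv 0 = [set: 'S_0].
Proof.
apply/setP => s; rewrite !inE /avoids contains_pattern132 /shallow Istat_inversions_from.
rewrite /Dstat /Tstat !big_ord0 /=; apply/andP; split.
  by apply/existsP => -[[]].
by apply/involutionP => -[].
Qed.

Lemma card_shallow132inv n : #|shallow132inv n| = fib n.+1.
Proof.
have card0 : #|shallow132inv 0| = 1 by rewrite shallow132inv0 cardsT card_Sn.
have card1 : #|shallow132inv 1| = 1.
  suff -> : shallow132inv 1 = (@fixlast 0) @: shallow132inv 0.
    by rewrite card_imset ?card0 //; exact: fixlast_inj.
  apply/setP => s; apply/idP/imsetP => [s_in|[r r_in ->]]; last by rewrite fixlast_in.
  have [r Er] : exists r, s = fixlast r.
    by apply: perm_fixed_lift; rewrite (ord1 (s ord_max)); apply/val_inj.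
  by exists r; rewrite // -fixlast_in -Er.
suff : #|shallow132inv n| = fib n.+1 /\ #|shallow132inv n.+1| = fib n.+2 by case.
elim: n => [|n [IHn IHn1]]; first by [].
by split => //; rewrite card_shallow132inv_rec IHn IHn1 /= addnC.
Qed.

Theorem theorem3p6 (n : nat) (hn : 1 <= n) :
  #|[set s : 'S_n | [&& shallow s, avoids [:: 1; 3; 2] s & involution s]]|
  = fib n.+1.
Proof. exact: card_shallow132inv. Qed.
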